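(* Let $\beta=(\pi_\ell)_{\ell=1}^L$ be a chainable and non-redundant architecture. Then for any $1\le q\le s<t\le L$, the pair $(\pi_q*\cdots*\pi_s,\ \pi_{s+1}*\cdots*\pi_t)$ is chainable and non-redundant.
   Context: A pattern is a tuple $\pi=(a,b,c,d)$ of positive integers. Patterns $\pi=(a,b,c,d),\pi'=(a',b',c',d')$ are chainable if $ac/a'=b'd'/d$, this common value $r(\pi,\pi')$ is an integer, $a\mid a'$ and $d'\mid d$; then $\pi*\pi':=(a,bd/d',a'c'/a,d')$. A chainable pair $(\pi,\pi')$ is redundant if $r(\pi,\pi')\ge\min(b,c')$, and non-redundant otherwise. An architecture $\beta=(\pi_\ell)_{\ell=1}^L$, $\pi_\ell=(a_\ell,b_\ell,c_\ell,d_\ell)$, is a sequence of patterns with $a_\ell c_\ell d_\ell=a_{\ell+1}b_{\ell+1}d_{\ell+1}$; it is chainable if every consecutive pair is chainable, and a chainable architecture is redundant if some consecutive pair $(\pi_\ell,\pi_{\ell+1})$ is redundant. $\pi_q*\cdots*\pi_s$ is the iterated product. *)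

From mathcomp Require Import all_boot.
Set Implicit Arguments. Unset Strict Implicit. Unset Printing Implicit Defensive.

Record pattern := Pat { pa : nat; pb : nat; pc : nat; pd : nat }.

Definition pos_pattern (p : pattern) : Prop :=
  0 < pa p /\ 0 < pb p /\ 0 < pc p /\ 0 < pd p.

Definition chainable (p p' : pattern) : Prop :=
  (exists r : nat, pa p * pc p = r * pa p' /\ pb p' * pd p' = r * pd p)
  /\ pa p %| pa p' /\ pd p' %| pd p.

(* the common value r(p,p') (meaningful when chainable) *)
Definition rval (p p' : pattern) : nat := (pa p * pc p) %/ pa p'.

(* pi * pi' = (a, b d / d', a' c' / a, d')  (exact divisions when chainable) *)
Definition pstar (p p' : pattern) : pattern :=
  Pat (pa p) ((pb p * pd p) %/ pd p') ((pa p' * pc p') %/ pa p) (pd p').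

Definition redundant_pair (p p' : pattern) : Prop :=
  chainable p p' /\ minn (pb p) (pc p') <= rval p p'.

Definition nonredundant_pair (p p' : pattern) : Prop :=
  chainable p p' /\ rval p p' < minn (pb p) (pc p').

Definition pat0 : pattern := Pat 1 1 1 1.

Definition pi_ (beta : seq pattern) (l : nat) : pattern := nth pat0 beta l.-1.

Definition architecture (beta : seq pattern) : Prop :=
  (forall l, 1 <= l <= size beta -> pos_pattern (pi_ beta l)) /\
  (forall l, 1 <= l -> l < size beta ->
     pa (pi_ beta l) * pc (pi_ beta l) * pd (pi_ beta l) =
     pa (pi_ beta l.+1) * pb (pi_ beta l.+1) * pd (pi_ beta l.+1)).

Definition chainable_arch (beta : seq pattern) : Prop :=
  architecture beta /\
  forall l, 1 <= l -> l < size beta -> chainable (pi_ beta l) (pi_ beta l.+1).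

Definition nonredundant_arch (beta : seq pattern) : Prop :=
  forall l, 1 <= l -> l < size beta -> ~ redundant_pair (pi_ beta l) (pi_ beta l.+1).

Definition iprod (beta : seq pattern) (q s : nat) : pattern :=
  foldl pstar (pi_ beta q) [seq pi_ beta k | k <- iota q.+1 (s - q)].

From mathcomp Require Import all_boot.
From mathcomp Require Import zify.

Set Implicit Arguments.
Unset Strict Implicit.
Unset Printing Implicit Defensive.

(* Along a chainable non-redundant architecture, [a_l] grows and [d_l] shrinks
   for divisibility, while [r_l < min(b_l, c_(l+1))] makes [b_l d_l] decrease
   and [a_l c_l] increase.  The product [pi_q * ... * pi_s] is
   [(a_q, b_q d_q / d_s, a_s c_s / a_q, d_s)]: it keeps the outer data of its
   end factors and can only have a larger [b] and [c] than its inner ends.  So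
   the junction [(pi_q * ... * pi_s, pi_(s+1) * ... * pi_t)] has the same ratio
   [r_s] as [(pi_s, pi_(s+1))] and inherits its non-redundancy. *)

Definition spans (P p p' : pattern) : Prop :=
  [/\ pa P = pa p, pd P = pd p',
      pa P * pc P = pa p' * pc p' & pb P * pd P = pb p * pd p].

Lemma pstar_spans P p p' m :
  spans P p m -> pa P %| pa p' -> pd p' %| pd P -> spans (pstar P p') p p'.
Proof.
case=> aP _ _ bdP apP dpP; split=> //=.
- by rewrite mulnC divnK //; apply: dvdn_mulr.
- by rewrite divnK -?bdP //; apply: dvdn_mull.
Qed.

Lemma chainable_rvalE p p' : 0 < pa p' -> chainable p p' ->
  pa p * pc p = rval p p' * pa p' /\ pb p' * pd p' = rval p p' * pd p.
Proof. by move=> a'_gt0 [[r [ac_eq bd_eq]] _]; rewrite /rval ac_eq mulnK. Qed.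

Lemma nonredundant_pair_bd_le p p' : 0 < pa p' -> nonredundant_pair p p' ->
  pb p' * pd p' <= pb p * pd p.
Proof.
move=> a'_gt0 [ch r_lt]; have [_ ->] := chainable_rvalE a'_gt0 ch.
by rewrite leq_mul2r ltnW ?orbT // (leq_trans r_lt) ?geq_minl.
Qed.

Lemma nonredundant_pair_ac_le p p' : 0 < pa p' -> nonredundant_pair p p' ->
  pa p * pc p <= pa p' * pc p'.
Proof.
move=> a'_gt0 [ch r_lt]; have [-> _] := chainable_rvalE a'_gt0 ch.
by rewrite mulnC leq_mul2l ltnW ?orbT // (leq_trans r_lt) ?geq_minr.
Qed.

(* Only the outer data of [P] and [P'] enter [rval] and [chainable], so the
   ratio of [(p, p')] is kept while the bound [min(b, c')] can only grow. *)
Lemma nonredundant_pair_widen P P' p p' :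
  pa P %| pa p -> pa P * pc P = pa p * pc p -> pd P = pd p -> pb p <= pb P ->
  pd P' %| pd p' -> pb P' * pd P' = pb p' * pd p' -> pa P' = pa p' ->
  pc p' <= pc P' ->
  nonredundant_pair p p' -> nonredundant_pair P P'.
Proof.
move=> aPp acP dP bP dPp bdP aP' cP' [[[r [ac_eq bd_eq]] [app' dp'p]] r_lt].
have rvalE : rval P P' = rval p p' by rewrite /rval acP aP'.
split; last by rewrite rvalE (leq_trans r_lt) // leq_min !geq_min bP cP' orbT.
split; first by exists r; rewrite acP aP' bdP dP.
by rewrite aP' dP; split; [apply: dvdn_trans app' | apply: dvdn_trans dp'p].
Qed.

Lemma iprod_id beta q : iprod beta q q = pi_ beta q.
Proof. by rewrite /iprod subnn. Qed.

Lemma iprodS beta q s : q <= s ->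
  iprod beta q s.+1 = pstar (iprod beta q s) (pi_ beta s.+1).
Proof.
move=> le_qs; rewrite /iprod subSn // -[(s - q).+1]addn1 iotaD map_cat foldl_cat.
by rewrite addSn subnKC.
Qed.

Section ChainableNonredundantArchitecture.

Variable beta : seq pattern.
Hypothesis beta_chainable : chainable_arch beta.
Hypothesis beta_nonredundant : nonredundant_arch beta.

Local Notation pi := (pi_ beta).

Lemma arch_pos l : 0 < l <= size beta -> pos_pattern (pi l).
Proof. by case: beta_chainable => [[pos _] _]; apply: pos. Qed.

Lemma arch_chainable l : 0 < l < size beta -> chainable (pi l) (pi l.+1).
Proof. by case/andP=> l_gt0 l_lt; apply: beta_chainable.2. Qed.

Lemma arch_nonredundant l : 0 < l < size beta ->
  nonredundant_pair (pi l) (pi l.+1).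
Proof.
move=> l_range; have ch := arch_chainable l_range.
have [l_gt0 l_lt] := andP l_range.
split=> //; rewrite ltnNge; apply/negP=> le_min.
exact: (beta_nonredundant l_gt0 l_lt).
Qed.

Lemma arch_pa_succ_gt0 l : 0 < l < size beta -> 0 < pa (pi l.+1).
Proof. by move=> l_range; have [] := @arch_pos l.+1 ltac:(lia). Qed.

Lemma arch_homo (r : nat -> nat -> Prop) (f : pattern -> nat) :
  (forall x, r x x) -> (forall y x z, r x y -> r y z -> r x z) ->
  (forall l, 0 < l < size beta -> r (f (pi l)) (f (pi l.+1))) ->
  forall i j, 0 < i <= j -> j <= size beta -> r (f (pi i)) (f (pi j)).
Proof.
move=> r_refl r_trans r_step i j /andP[i_gt0 le_ij] j_le.
pose D := [pred l | 0 < l <= size beta].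
have D_convex : {in D &, forall i j k, i < k < j -> k \in D}.
  by move=> i1 j1; rewrite !inE => Di1 Dj1 k ikj; rewrite inE; lia.
have r_stepD : {in D, forall l, l.+1 \in D -> r ((f \o pi) l) ((f \o pi) l.+1)}.
  by move=> l; rewrite !inE => Dl Dl1; apply: r_step; lia.
by apply: (homo_leq_in r_refl r_trans D_convex r_stepD); rewrite ?inE; lia.
Qed.

Lemma arch_pa_dvd i j : 0 < i <= j -> j <= size beta -> pa (pi i) %| pa (pi j).
Proof.
apply: (@arch_homo dvdn pa) => [|y x z|l /arch_chainable[_ []]] //.
exact: dvdn_trans.
Qed.

Lemma arch_pd_dvd i j : 0 < i <= j -> j <= size beta -> pd (pi j) %| pd (pi i).
Proof.
apply: (@arch_homo (fun x y => y %| x) pd) => [|y x z|l /arch_chainable[_ []]] //.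
by move=> xy yz; apply: dvdn_trans xy.
Qed.

Lemma arch_bd_le i j : 0 < i <= j -> j <= size beta ->
  pb (pi j) * pd (pi j) <= pb (pi i) * pd (pi i).
Proof.
apply: (@arch_homo (fun x y => y <= x) (fun p => pb p * pd p)) => [|y x z|l l_range] //.
- by move=> yx zy; apply: leq_trans zy yx.
- exact: nonredundant_pair_bd_le (arch_pa_succ_gt0 l_range) (arch_nonredundant l_range).
Qed.

Lemma arch_ac_le i j : 0 < i <= j -> j <= size beta ->
  pa (pi i) * pc (pi i) <= pa (pi j) * pc (pi j).
Proof.
apply: (@arch_homo (fun x y => x <= y) (fun p => pa p * pc p)) => [|y x z|l l_range] //.
- exact: leq_trans.
- exact: nonredundant_pair_ac_le (arch_pa_succ_gt0 l_range) (arch_nonredundant l_range).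
Qed.

Lemma iprod_spans q s : 0 < q <= s -> s <= size beta ->
  spans (iprod beta q s) (pi q) (pi s).
Proof.
case/andP=> q_gt0; elim: s => [|s IHs]; first by case: q q_gt0.
rewrite leq_eqVlt => /orP[/eqP<- _|le_qs s_lt]; first by rewrite iprod_id.
have PqS := IHs le_qs (ltnW s_lt); have [aP dP _ _] := PqS.
rewrite iprodS //; apply: pstar_spans PqS _ _.
- by rewrite aP; apply: arch_pa_dvd; lia.
- by rewrite dP; apply: arch_pd_dvd; lia.
Qed.

Lemma iprod_pb_ge q s : 0 < q <= s -> s <= size beta ->
  pb (pi s) <= pb (iprod beta q s).
Proof.
move=> qs_range s_le; have [_ dP _ bdP] := iprod_spans qs_range s_le.
have [_ [_ [_ ds_gt0]]] := @arch_pos s ltac:(lia).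
by rewrite -(leq_pmul2r ds_gt0) -dP bdP dP arch_bd_le.
Qed.

Lemma iprod_pc_ge q s : 0 < q <= s -> s <= size beta ->
  pc (pi q) <= pc (iprod beta q s).
Proof.
move=> qs_range s_le; have [aP _ acP _] := iprod_spans qs_range s_le.
have [aq_gt0 _] := @arch_pos q ltac:(lia).
by rewrite -(leq_pmul2l aq_gt0) -{2}aP acP arch_ac_le.
Qed.

End ChainableNonredundantArchitecture.

Theorem lemma4p12 (beta : seq pattern) :
  chainable_arch beta -> nonredundant_arch beta ->
  forall q s t : nat, 1 <= q -> q <= s -> s < t -> t <= size beta ->
    nonredundant_pair (iprod beta q s) (iprod beta (s.+1) t).
Proof.
move=> ch nr q s t q_gt0 le_qs lt_st t_le.
have left_range : 0 < q <= s by rewrite q_gt0.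
have s_le : s <= size beta by lia.
have right_range : 0 < s.+1 <= t by [].
have [aL dL acL _] := iprod_spans ch left_range s_le.
have [aR dR _ bdR] := iprod_spans ch right_range t_le.
apply: (@nonredundant_pair_widen _ _ (pi_ beta s) (pi_ beta s.+1)) => //.
- by rewrite aL (arch_pa_dvd ch).
- exact: iprod_pb_ge.
- by rewrite dR (arch_pd_dvd ch).
- exact: iprod_pc_ge.
- by apply: arch_nonredundant => //; lia.
Qed.
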